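(* Let $\varphi_0\in\mathbb{R}$ and let $v$ be a smooth function with $v(\varphi)>0$ and $v'(\varphi)>0$ for all $\varphi\ge\varphi_0$. Let $R_0=\{(\varphi,h)\in\mathbb{R}^2:\varphi_0\le\varphi<\infty,\ \sqrt{v(\varphi)}<h<\infty\}$ and let $\Gamma$ be the curve $h=\sqrt{v(\varphi)}$. Let $h$ be the solution of $h'=\sqrt{h^2-v}$ with initial value $h(\varphi_0)=h_0$, $h_0>\sqrt{v(\varphi_0)}$. Then exactly one of the following holds: either (type A) there is a finite $\varphi_1>\varphi_0$ such that the solution exists in $R_0$ on $[\varphi_0,\varphi_1)$ and reaches the lower boundary $\Gamma$ at $\varphi_1$, i.e. $h(\varphi)\to\sqrt{v(\varphi_1)}$ as $\varphi\to\varphi_1^-$, with a horizontal half-tangent there ($h'(\varphi)\to0$); or (type B) the solution exists and remains in $R_0$ for all $\varphi>\varphi_0$. *)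

From Stdlib Require Import Reals.
From Coquelicot Require Import Coquelicot.
Open Scope R_scope.

Definition smooth (v : R -> R) : Prop := forall (n : nat) (x : R), ex_derive_n v n x.

Definition in_R0 (phi0 : R) (v : R -> R) (phi hh : R) : Prop :=
  phi0 <= phi /\ sqrt (v phi) < hh.

Definition solves_in_R0 (phi0 h0 : R) (v : R -> R) (h : R -> R) (T : Rbar) : Prop :=
  h phi0 = h0 /\
  filterlim h (at_right phi0) (locally h0) /\
  (forall phi, phi0 < phi -> Rbar_lt phi T ->
     is_derive h phi (sqrt (h phi ^ 2 - v phi))) /\
  (forall phi, phi0 <= phi -> Rbar_lt phi T -> in_R0 phi0 v phi (h phi)).

Definition typeA (phi0 h0 : R) (v : R -> R) : Prop :=
  exists (phi1 : R) (h : R -> R),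
    phi0 < phi1 /\ solves_in_R0 phi0 h0 v h (Finite phi1) /\
    filterlim h (at_left phi1) (locally (sqrt (v phi1))) /\
    filterlim (Derive h) (at_left phi1) (locally 0).

Definition typeB (phi0 h0 : R) (v : R -> R) : Prop :=
  exists h : R -> R, solves_in_R0 phi0 h0 v h p_infty.

(* The right-hand side sqrt (h^2 - v) is Lipschitz in h wherever h^2 - v stays away
   from 0, so Picard iteration gives local solutions and a Gronwall estimate gives
   uniqueness. Gluing all solutions yields a maximal one on [phi0, Tmax). Along it
   0 <= h' <= h, so if Tmax is finite h increases to a finite limit L. Were
   L^2 > v(Tmax), the local solution through (Tmax, L) would continue h beyond Tmax;
   hence L = sqrt (v Tmax) and h' = sqrt (h^2 - v) -> 0, which is type A, while
   Tmax = +oo is type B. A type-B solution coincides with a type-A one before phi1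
   and is continuous at phi1, so it would touch Gamma there: the types exclude each
   other. *)

From Stdlib Require Import Reals Lra Lia ClassicalEpsilon.
From Coquelicot Require Import Coquelicot.
Open Scope R_scope.

Section Limits.
Context {T : Type} {F : (T -> Prop) -> Prop} {FF : Filter F}.

Lemma filterlim_Rminus (y w : T -> R) a b :
  filterlim y F (locally a) -> filterlim w F (locally b) ->
  filterlim (fun t => y t - w t) F (locally (a - b)).
Proof.
  intros Hy Hw.
  exact (filterlim_comp_2 y (fun t => - w t) Rplus Hy
           (filterlim_comp _ _ _ w Ropp _ _ _ Hw (filterlim_opp b)) (filterlim_plus a (- b))).
Qed.

Lemma filterlim_Rmult (y w : T -> R) a b :
  filterlim y F (locally a) -> filterlim w F (locally b) ->
  filterlim (fun t => y t * w t) F (locally (a * b)).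
Proof.
  intros Hy Hw. exact (filterlim_comp_2 y w Rmult Hy Hw (filterlim_mult a b)).
Qed.

Lemma filterlim_sqr_sub (y w : T -> R) a b :
  filterlim y F (locally a) -> filterlim w F (locally b) ->
  filterlim (fun t => y t ^ 2 - w t) F (locally (a ^ 2 - b)).
Proof.
  intros Hy Hw. apply filterlim_Rminus; [| exact Hw].
  apply (filterlim_comp _ _ _ y (fun u => u ^ 2) _ (locally a)); [exact Hy |].
  apply (ex_derive_continuous (fun u => u ^ 2)). auto_derive. exact I.
Qed.

Lemma filterlim_eventually_gt (f : T -> R) L c :
  filterlim f F (locally L) -> c < L -> F (fun t => c < f t).
Proof.
  intros Hf Hc. apply (Hf (fun u => c < u)).
  apply (locally_interval _ L c p_infty Hc I). intros u Hu _. exact Hu.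
Qed.

Lemma filterlim_eventually_lt (f : T -> R) L c :
  filterlim f F (locally L) -> L < c -> F (fun t => f t < c).
Proof.
  intros Hf Hc. apply (Hf (fun u => u < c)).
  apply (locally_interval _ L m_infty c I Hc). intros u _ Hu. exact Hu.
Qed.

End Limits.

Lemma at_right_interval (x : R) (P : R -> Prop) :
  at_right x P -> exists e, 0 < e /\ forall u, x < u < x + e -> P u.
Proof.
  intros [e He]. exists e. split; [apply cond_pos|].
  intros u Hu. apply He; [change (Rabs (u - x) < e); apply Rabs_def1; lra | lra].
Qed.

Lemma at_left_interval (x : R) (P : R -> Prop) :
  at_left x P -> exists e, 0 < e /\ forall u, x - e < u < x -> P u.
Proof.
  intros [e He]. exists e. split; [apply cond_pos|].
  intros u Hu. apply He; [change (Rabs (u - x) < e); apply Rabs_def1; lra | lra].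
Qed.

Lemma at_right_of_interval (x b : R) (P : R -> Prop) :
  x < b -> (forall u, x < u < b -> P u) -> at_right x P.
Proof.
  intros Hb HP. apply (locally_interval _ x m_infty b I Hb).
  intros u _ Hu Hxu. apply HP. simpl in Hu. lra.
Qed.

Lemma at_left_of_interval (a x : R) (P : R -> Prop) :
  a < x -> (forall u, a < u < x -> P u) -> at_left x P.
Proof.
  intros Ha HP. apply (locally_interval _ x a p_infty Ha I).
  intros u Hu _ Hux. apply HP. simpl in Hu. lra.
Qed.

Lemma continuous_at_left (f : R -> R) x :
  continuous f x -> filterlim f (at_left x) (locally (f x)).
Proof. intros H. exact (filterlim_filter_le_1 _ (filter_le_within _) H). Qed.

Lemma continuous_at_right (f : R -> R) x :
  continuous f x -> filterlim f (at_right x) (locally (f x)).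
Proof. intros H. exact (filterlim_filter_le_1 _ (filter_le_within _) H). Qed.

Lemma is_derive_continuous (f : R -> R) x l : is_derive f x l -> continuous f x.
Proof. intros H. apply (ex_derive_continuous f). exists l. exact H. Qed.

Lemma continuous_sqr_sub (y w : R -> R) x : continuous y x -> continuous w x ->
  continuous (fun t => y t ^ 2 - w t) x.
Proof.
  intros Hy Hw. apply (continuous_minus (fun t => y t ^ 2) w); [| exact Hw].
  apply (continuous_comp y (fun u => u ^ 2)); [exact Hy |].
  apply (ex_derive_continuous (fun u => u ^ 2)). auto_derive. exact I.
Qed.

Lemma nondecreasing_of_derive_nonneg (f df : R -> R) a b :
  (forall t, a < t < b -> is_derive f t (df t) /\ 0 <= df t) ->
  forall s t, a < s -> s <= t -> t < b -> f s <= f t.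
Proof.
  intros Hf s t Hs Hst Htb.
  destruct (MVT_gen f s t df) as [c [Hc E]].
  - intros x Hx. rewrite Rmin_left, Rmax_right in Hx by lra. apply Hf. lra.
  - intros x Hx. rewrite Rmin_left, Rmax_right in Hx by lra.
    apply continuity_pt_filterlim, (is_derive_continuous _ _ (df x)), Hf. lra.
  - rewrite Rmin_left, Rmax_right in Hc by lra.
    assert (0 <= df c) by (apply Hf; lra). nra.
Qed.

Lemma sq_exp_nonincreasing (u : R -> R) a b K :
  (forall t, a < t < b -> ex_derive u t /\ Rabs (Derive u t) <= K * Rabs (u t)) ->
  forall s t, a < s <= t -> t < b ->
  u t ^ 2 * exp (- (2 * K) * t) <= u s ^ 2 * exp (- (2 * K) * s).
Proof.
  intros Hu s t Hs Ht.
  set (dw := fun x => (2 * K * u x ^ 2 - 2 * u x * Derive u x) * exp (- (2 * K) * x)).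
  enough (- (u s ^ 2 * exp (- (2 * K) * s)) <= - (u t ^ 2 * exp (- (2 * K) * t))) by lra.
  apply (nondecreasing_of_derive_nonneg (fun x => - (u x ^ 2 * exp (- (2 * K) * x))) dw a b);
    try lra.
  intros x Hx. destruct (Hu x Hx) as [Hex Hbound]. split.
  - unfold dw. auto_derive; [exact Hex |].
    change (Derive (fun x0 => u x0) x) with (Derive u x). ring.
  - assert (Hprod : u x * Derive u x <= K * u x ^ 2).
    { apply Rle_trans with (Rabs (u x) * Rabs (Derive u x)).
      - rewrite <- Rabs_mult. apply Rle_abs.
      - rewrite <- (pow2_abs (u x)).
        assert (0 <= Rabs (u x)) by apply Rabs_pos. nra. }
    unfold dw. apply Rmult_le_pos; [lra | apply Rlt_le, exp_pos].
Qed.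

Lemma gronwall_right (u : R -> R) a b K : 0 <= K ->
  (forall t, a < t < b -> ex_derive u t /\ Rabs (Derive u t) <= K * Rabs (u t)) ->
  filterlim u (at_right a) (locally 0) -> forall t, a < t < b -> u t = 0.
Proof.
  intros HK Hu Hlim t Ht.
  set (c := u t ^ 2 * exp (- (2 * K) * t)).
  assert (Hc : forall s, a < s <= t -> c <= u s * u s * exp (- (2 * K) * a)).
  { intros s Hs.
    apply Rle_trans with (u s ^ 2 * exp (- (2 * K) * s)).
    - apply (sq_exp_nonincreasing u a b K Hu); lra.
    - replace (u s * u s) with (u s ^ 2) by ring.
      apply Rmult_le_compat_l; [apply pow2_ge_0 |].
      destruct (Req_dec K 0) as [->|HK0]; [right; f_equal; ring |].
      left. apply exp_increasing. nra. }
  assert (Hc0 : Rbar_le c 0).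
  { apply (filterlim_le (F := at_right a) (fun _ => c) (fun s => u s * u s * exp (- (2 * K) * a))).
    - apply (at_right_of_interval a t); [lra |]. intros s Hs. apply Hc. lra.
    - apply filterlim_const.
    - replace (Finite 0) with (Finite (0 * 0 * exp (- (2 * K) * a))) by (f_equal; ring).
      apply filterlim_Rmult; [apply filterlim_Rmult; exact Hlim | apply filterlim_const]. }
  simpl in Hc0.
  assert (Hsq : u t ^ 2 = 0).
  { assert (0 < exp (- (2 * K) * t)) by apply exp_pos.
    assert (0 <= u t ^ 2) by apply pow2_ge_0. unfold c in Hc0. nra. }
  simpl in Hsq. nra.
Qed.

Lemma gronwall_left (u : R -> R) a b K : 0 <= K ->
  (forall t, a < t < b -> ex_derive u t /\ Rabs (Derive u t) <= K * Rabs (u t)) ->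
  filterlim u (at_left b) (locally 0) -> forall t, a < t < b -> u t = 0.
Proof.
  intros HK Hu Hlim t Ht.
  replace t with (- - t) by ring.
  apply (gronwall_right (fun x => u (- x)) (- b) (- a) K HK); [| | lra].
  - intros x Hx. destruct (Hu (- x) ltac:(lra)) as [Hex Hb].
    assert (D : is_derive (fun x => u (- x)) x (- Derive u (- x))).
    { auto_derive; [exact Hex |].
      change (Derive (fun x0 => u x0) (- x)) with (Derive u (- x)). ring. }
    split; [exists (- Derive u (- x)); exact D |].
    replace (Derive (fun x => u (- x)) x) with (- Derive u (- x))
      by (symmetry; exact (is_derive_unique _ _ _ D)).
    rewrite Rabs_Ropp. exact Hb.
  - apply (filterlim_comp _ _ _ Ropp u _ (at_left b)); [| exact Hlim].
    rewrite <- (Ropp_involutive b) at 2. apply filterlim_Ropp_right.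
Qed.

Lemma sqrt_diff_le A B m : 0 < m -> m <= A -> m <= B ->
  Rabs (sqrt A - sqrt B) <= Rabs (A - B) / (2 * sqrt m).
Proof.
  intros Hm HA HB.
  assert (Hsm : 0 < sqrt m) by (apply sqrt_lt_R0; lra).
  assert (HsA : sqrt m <= sqrt A) by (apply sqrt_le_1_alt; lra).
  assert (HsB : sqrt m <= sqrt B) by (apply sqrt_le_1_alt; lra).
  assert (EA : sqrt A * sqrt A = A) by (apply sqrt_sqrt; lra).
  assert (EB : sqrt B * sqrt B = B) by (apply sqrt_sqrt; lra).
  replace (A - B) with ((sqrt A - sqrt B) * (sqrt A + sqrt B)) by nra.
  rewrite Rabs_mult, (Rabs_pos_eq (sqrt A + sqrt B)) by lra.
  apply (Rmult_le_reg_r (2 * sqrt m)); [lra |].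
  unfold Rdiv. rewrite Rmult_assoc, Rinv_l, Rmult_1_r by lra.
  apply Rmult_le_compat_l; [apply Rabs_pos | lra].
Qed.

Lemma sqrt_sqr_sub_lipschitz p q w m M : 0 < m ->
  m <= p ^ 2 - w -> m <= q ^ 2 - w -> 0 <= p -> 0 <= q -> p + q <= M ->
  Rabs (sqrt (p ^ 2 - w) - sqrt (q ^ 2 - w)) <= M / (2 * sqrt m) * Rabs (p - q).
Proof.
  intros Hm Hp Hq Hp0 Hq0 HM.
  eapply Rle_trans; [apply (sqrt_diff_le _ _ m); assumption |].
  replace (p ^ 2 - w - (q ^ 2 - w)) with ((p - q) * (p + q)) by ring.
  rewrite Rabs_mult, (Rabs_pos_eq (p + q)) by lra.
  assert (Hs : 0 < sqrt m) by (apply sqrt_lt_R0; lra).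
  replace (M / (2 * sqrt m) * Rabs (p - q)) with (Rabs (p - q) * M / (2 * sqrt m)) by (field; lra).
  apply Rmult_le_compat_r; [apply Rlt_le, Rinv_0_lt_compat; lra |].
  apply Rmult_le_compat_l; [apply Rabs_pos | exact HM].
Qed.

Definition bounded_solution (v y : R -> R) (p q m M : R) : Prop :=
  forall t, p < t < q ->
    is_derive y t (sqrt (y t ^ 2 - v t)) /\ m <= y t ^ 2 - v t /\ 0 <= y t <= M.

Lemma bounded_solutions_gronwall v y z p q m M : 0 < m ->
  bounded_solution v y p q m M -> bounded_solution v z p q m M ->
  forall t, p < t < q -> ex_derive (fun s => y s - z s) t /\
    Rabs (Derive (fun s => y s - z s) t) <= Rabs M / sqrt m * Rabs (y t - z t).
Proof.
  intros Hm Hy Hz t Ht.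
  destruct (Hy t Ht) as [Dy [my By]]. destruct (Hz t Ht) as [Dz [mz Bz]].
  assert (D : is_derive (fun s => y s - z s) t (sqrt (y t ^ 2 - v t) - sqrt (z t ^ 2 - v t)))
    by exact (is_derive_minus y z t _ _ Dy Dz).
  split; [eexists; exact D |].
  replace (Derive (fun s => y s - z s) t) with (sqrt (y t ^ 2 - v t) - sqrt (z t ^ 2 - v t))
    by (symmetry; apply is_derive_unique; exact D).
  replace (Rabs M / sqrt m) with (2 * Rabs M / (2 * sqrt m))
    by (field; apply Rgt_not_eq, sqrt_lt_R0; lra).
  apply sqrt_sqr_sub_lipschitz; try lra.
  rewrite Rabs_pos_eq; lra.
Qed.

Lemma bounded_solutions_agree_right v y z p q m M : 0 < m ->
  bounded_solution v y p q m M -> bounded_solution v z p q m M ->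
  filterlim (fun t => y t - z t) (at_right p) (locally 0) ->
  forall t, p < t < q -> y t = z t.
Proof.
  intros Hm Hy Hz Hlim t Ht. apply Rminus_diag_uniq.
  apply (gronwall_right (fun s => y s - z s) p q (Rabs M / sqrt m)); try assumption.
  - apply Rdiv_le_0_compat; [apply Rabs_pos | apply sqrt_lt_R0; lra].
  - exact (bounded_solutions_gronwall v y z p q m M Hm Hy Hz).
Qed.

Lemma bounded_solutions_agree_left v y z p q m M : 0 < m ->
  bounded_solution v y p q m M -> bounded_solution v z p q m M ->
  filterlim (fun t => y t - z t) (at_left q) (locally 0) ->
  forall t, p < t < q -> y t = z t.
Proof.
  intros Hm Hy Hz Hlim t Ht. apply Rminus_diag_uniq.
  apply (gronwall_left (fun s => y s - z s) p q (Rabs M / sqrt m)); try assumption.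
  - apply Rdiv_le_0_compat; [apply Rabs_pos | apply sqrt_lt_R0; lra].
  - exact (bounded_solutions_gronwall v y z p q m M Hm Hy Hz).
Qed.

Lemma bounded_solution_weaken v y p q m M m' M' : m' <= m -> M <= M' ->
  bounded_solution v y p q m M -> bounded_solution v y p q m' M'.
Proof.
  intros Hm HM Hy t Ht. destruct (Hy t Ht) as [D [Hb1 [Hb2 Hb3]]].
  split; [exact D | split; [lra | split; lra]].
Qed.

Lemma geometric_bound_nonpos x C : (forall n, x <= C * (/ 2) ^ n) -> x <= 0.
Proof.
  intros H.
  destruct (Rle_or_lt x 0) as [E|E]; [exact E | exfalso].
  assert (HC : 0 < C) by (specialize (H O); simpl in H; lra).
  destruct (pow_lt_1_zero (/ 2)) with (y := x / C) as [N HN].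
  - rewrite Rabs_pos_eq; lra.
  - apply Rdiv_lt_0_compat; lra.
  - specialize (HN N (le_n N)). specialize (H N).
    rewrite Rabs_pos_eq in HN by (apply pow_le; lra).
    apply (Rmult_lt_compat_l C) in HN; [| lra].
    replace (C * (x / C)) with x in HN by (field; lra). lra.
Qed.

Lemma segment_dist a s t : Rmin a t <= s <= Rmax a t -> Rabs (s - a) <= Rabs (t - a).
Proof. unfold Rmin, Rmax. destruct (Rle_dec a t); intros; split_Rabs; lra. Qed.

Lemma abs_RInt_le_segment (f : R -> R) a t C :
  (forall s, Rmin a t <= s <= Rmax a t -> continuous f s) ->
  (forall s, Rmin a t <= s <= Rmax a t -> Rabs (f s) <= C) ->
  Rabs (RInt f a t) <= Rabs (t - a) * C.
Proof.
  intros Hc Hb.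
  destruct (Rle_or_lt a t) as [H|H].
  - rewrite (Rabs_pos_eq (t - a)) by lra.
    apply abs_RInt_le_const; [exact H | apply (ex_RInt_continuous (V := R_CompleteNormedModule)), Hc |].
    intros s Hs. apply Hb. rewrite Rmin_left, Rmax_right; lra.
  - rewrite <- opp_RInt_swap
      by (apply (ex_RInt_continuous (V := R_CompleteNormedModule));
          rewrite Rmin_comm, Rmax_comm; exact Hc).
    change (Rabs (- RInt f t a) <= Rabs (t - a) * C).
    rewrite Rabs_Ropp, (Rabs_left (t - a)), Ropp_minus_distr by lra.
    apply abs_RInt_le_const; [lra | apply (ex_RInt_continuous (V := R_CompleteNormedModule)) |].
    + rewrite Rmin_comm, Rmax_comm. exact Hc.
    + intros s Hs. apply Hb. rewrite Rmin_right, Rmax_left; lra.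
Qed.

Lemma is_derive_RInt_plus_const (g : R -> R) c a x p q : p < a < q -> p < x < q ->
  (forall z, p < z < q -> continuous g z) ->
  is_derive (fun t => c + RInt g a t) x (g x).
Proof.
  intros Ha Hx Hc.
  replace (g x) with (0 + g x) by ring.
  apply (is_derive_plus (fun _ => c) (fun t => RInt g a t));
    [exact (@is_derive_const R_AbsRing R_NormedModule c x) |].
  apply is_derive_RInt with a; [| apply Hc, Hx].
  apply (locally_interval _ x p q (proj1 Hx) (proj2 Hx)).
  intros b Hpb Hbq. apply (RInt_correct (V := R_CompleteNormedModule)).
  apply (ex_RInt_continuous (V := R_CompleteNormedModule)).
  intros z Hz. apply Hc. simpl in Hpb, Hbq.
  unfold Rmin, Rmax in Hz. destruct (Rle_dec a b); lra.
Qed.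

Lemma lipschitz_continuous (g : R -> R) p q L t : p < t < q ->
  (forall s, p < s < q -> Rabs (g s - g t) <= L * Rabs (s - t)) -> continuous g t.
Proof.
  intros Ht Hl. apply filterlim_locally. intros eps.
  assert (Hd : 0 < eps / (Rabs L + 1))
    by (apply Rdiv_lt_0_compat; [apply cond_pos | assert (0 <= Rabs L) by apply Rabs_pos; lra]).
  generalize (filter_and _ _
                (locally_interval _ t p q (proj1 Ht) (proj2 Ht) (fun s H1 H2 => conj H1 H2))
                (locally_ball t (mkposreal _ Hd))).
  apply filter_imp. intros s [Hs Hb].
  change (Rabs (g s - g t) < eps). change (Rabs (s - t) < eps / (Rabs L + 1)) in Hb.
  assert (HL : L * Rabs (s - t) <= Rabs L * Rabs (s - t))
    by (apply Rmult_le_compat_r; [apply Rabs_pos | apply Rle_abs]).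
  assert (Heps : (Rabs L + 1) * (eps / (Rabs L + 1)) = eps)
    by (field; assert (0 <= Rabs L) by apply Rabs_pos; lra).
  assert (0 <= Rabs L) by apply Rabs_pos. assert (0 <= Rabs (s - t)) by apply Rabs_pos.
  specialize (Hl s Hs). nra.
Qed.

Section Picard.

Variables (f : R -> R -> R) (a y0 d r K B : R).
Hypothesis d_pos : 0 < d.
Hypothesis K_ge0 : 0 <= K.
Hypothesis B_ge0 : 0 <= B.
Hypothesis Bd_le_r : B * d <= r.
Hypothesis dK_le_half : d * K <= / 2.
Hypothesis f_continuous : forall t h, continuous (fun p : R * R => f (fst p) (snd p)) (t, h).
Hypothesis f_bounded : forall t h,
  Rabs (t - a) <= d -> Rabs (h - y0) <= r -> Rabs (f t h) <= B.
Hypothesis f_lipschitz : forall t h k,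
  Rabs (t - a) <= d -> Rabs (h - y0) <= r -> Rabs (k - y0) <= r ->
  Rabs (f t h - f t k) <= K * Rabs (h - k).

Lemma radius_nonneg : 0 <= r.
Proof. apply Rle_trans with (B * d); [apply Rmult_le_pos |]; lra. Qed.

Fixpoint picard (n : nat) : R -> R :=
  match n with
  | O => fun _ => y0
  | S n => fun t => y0 + RInt (fun s => f s (picard n s)) a t
  end.

Lemma continuous_f_comp (w : R -> R) x : continuous w x -> continuous (fun s => f s (w s)) x.
Proof.
  intros Hw. apply (continuous_comp_2 (fun s => s) w f); [apply continuous_id | exact Hw |].
  apply f_continuous.
Qed.

Lemma picard_succ_derive n : (forall x, continuous (picard n) x) ->
  forall x, is_derive (picard (S n)) x (f x (picard n x)).
Proof.
  intros Hc x.
  assert (Rmin a x <= a <= Rmax a x) by (split; [apply Rmin_l | apply Rmax_l]).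
  assert (Rmin a x <= x <= Rmax a x) by (split; [apply Rmin_r | apply Rmax_r]).
  apply (is_derive_RInt_plus_const (fun s => f s (picard n s)) y0 a x (Rmin a x - 1) (Rmax a x + 1));
    try lra.
  intros z _. apply continuous_f_comp, Hc.
Qed.

Lemma picard_continuous n x : continuous (picard n) x.
Proof.
  revert x. induction n as [|n IH]; intros x.
  - apply continuous_const.
  - exact (is_derive_continuous _ _ _ (picard_succ_derive n IH x)).
Qed.

Lemma picard_integrand_continuous n s : continuous (fun s => f s (picard n s)) s.
Proof. apply continuous_f_comp, picard_continuous. Qed.

Lemma picard_succ_sub n t :
  picard (S (S n)) t - picard (S n) t =
  RInt (fun s => f s (picard (S n) s) - f s (picard n s)) a t.
Proof.
  change (picard (S (S n)) t) with (y0 + RInt (fun s => f s (picard (S n) s)) a t).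
  change (picard (S n) t) with (y0 + RInt (fun s => f s (picard n s)) a t).
  rewrite Rminus_plus_l_l. symmetry. apply (RInt_minus (V := R_CompleteNormedModule));
    apply (ex_RInt_continuous (V := R_CompleteNormedModule));
    intros; apply picard_integrand_continuous.
Qed.

Lemma picard_at_center n : picard n a = y0.
Proof. destruct n; simpl; [reflexivity | rewrite RInt_point; unfold zero; simpl; ring]. Qed.

Lemma picard_dist n t : Rabs (t - a) <= d -> Rabs (picard n t - y0) <= B * Rabs (t - a).
Proof.
  revert t. induction n as [|n IH]; intros t Ht.
  - simpl. rewrite Rminus_diag, Rabs_R0. apply Rmult_le_pos; [lra | apply Rabs_pos].
  - change (picard (S n) t) with (y0 + RInt (fun s => f s (picard n s)) a t).
    rewrite Rplus_minus_l, Rmult_comm. apply abs_RInt_le_segment.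
    + intros s _. apply picard_integrand_continuous.
    + intros s Hs. apply segment_dist in Hs. apply f_bounded; [lra |].
      specialize (IH s ltac:(lra)).
      assert (B * Rabs (s - a) <= B * d) by (apply Rmult_le_compat_l; lra). lra.
Qed.

Lemma picard_in_ball n t : Rabs (t - a) <= d -> Rabs (picard n t - y0) <= r.
Proof.
  intros Ht. eapply Rle_trans; [apply picard_dist, Ht |].
  assert (B * Rabs (t - a) <= B * d) by (apply Rmult_le_compat_l; lra). lra.
Qed.

Lemma picard_step n t : Rabs (t - a) <= d ->
  Rabs (picard (S n) t - picard n t) <= r * (/ 2) ^ n.
Proof.
  revert t. induction n as [|n IH]; intros t Ht.
  - rewrite pow_O, Rmult_1_r. exact (picard_in_ball 1 t Ht).
  - rewrite picard_succ_sub.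
    assert (Hr : 0 <= r * (/ 2) ^ n).
    { apply Rmult_le_pos; [apply radius_nonneg | apply pow_le; lra]. }
    apply Rle_trans with (d * (K * (r * (/ 2) ^ n))).
    + eapply Rle_trans; [apply abs_RInt_le_segment |].
      * intros s _.
        apply (continuous_minus (fun s => f s (picard (S n) s)) (fun s => f s (picard n s)));
          apply picard_integrand_continuous.
      * intros s Hs. apply segment_dist in Hs.
        eapply Rle_trans; [apply f_lipschitz; try apply picard_in_ball; lra |].
        apply Rmult_le_compat_l; [exact K_ge0 | apply IH; lra].
      * apply Rmult_le_compat_r; [apply Rmult_le_pos; lra | exact Ht].
    + simpl. rewrite <- Rmult_assoc.
      replace (r * (/ 2 * (/ 2) ^ n)) with (/ 2 * (r * (/ 2) ^ n)) by ring.
      apply Rmult_le_compat_r; assumption.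
Qed.

Lemma picard_cauchy n k t : Rabs (t - a) <= d ->
  Rabs (picard (n + k) t - picard n t) <= 2 * r * ((/ 2) ^ n - (/ 2) ^ (n + k)).
Proof.
  intros Ht. induction k as [|k IH].
  - rewrite Nat.add_0_r, Rminus_diag, Rabs_R0. right. ring.
  - rewrite Nat.add_succ_r.
    replace (picard (S (n + k)) t - picard n t)
      with ((picard (S (n + k)) t - picard (n + k) t) + (picard (n + k) t - picard n t)) by ring.
    eapply Rle_trans; [apply Rabs_triang |].
    assert (H := picard_step (n + k) t Ht).
    simpl ((/ 2) ^ S (n + k)). lra.
Qed.

Lemma picard_cauchy_le n k t : Rabs (t - a) <= d ->
  Rabs (picard (n + k) t - picard n t) <= 2 * r * (/ 2) ^ n.
Proof.
  intros Ht. eapply Rle_trans; [apply picard_cauchy, Ht |].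
  assert (0 <= (/ 2) ^ (n + k)) by (apply pow_le; lra).
  assert (0 <= r) by apply radius_nonneg.
  nra.
Qed.

Definition picard_limit t : R := real (Lim_seq (fun n => picard n t)).

Lemma picard_limit_correct t : Rabs (t - a) <= d ->
  is_lim_seq (fun n => picard n t) (picard_limit t).
Proof.
  intros Ht. apply Lim_seq_correct', ex_lim_seq_cauchy_corr.
  intros eps.
  assert (Hr : 0 <= r) by apply radius_nonneg.
  destruct (pow_lt_1_zero (/ 2)) with (y := eps / (4 * r + 1)) as [N HN].
  { rewrite Rabs_pos_eq; lra. }
  { apply Rdiv_lt_0_compat; [apply cond_pos | lra]. }
  exists N. intros n p Hn Hp.
  specialize (HN N (le_n N)). rewrite Rabs_pos_eq in HN by (apply pow_le; lra).
  replace n with (N + (n - N))%nat by lia.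
  replace p with (N + (p - N))%nat by lia.
  assert (H1 := picard_cauchy_le N (n - N) t Ht).
  assert (H2 := picard_cauchy_le N (p - N) t Ht).
  replace (picard (N + (n - N)) t - picard (N + (p - N)) t)
    with ((picard (N + (n - N)) t - picard N t) - (picard (N + (p - N)) t - picard N t)) by ring.
  eapply Rle_lt_trans; [apply Rabs_triang |]. rewrite Rabs_Ropp.
  apply (Rmult_lt_compat_l (4 * r + 1)) in HN; [| lra].
  replace ((4 * r + 1) * (eps / (4 * r + 1))) with (pos eps) in HN by (field; lra).
  assert (0 <= (/ 2) ^ N) by (apply pow_le; lra). nra.
Qed.

Lemma picard_limit_approx n t : Rabs (t - a) <= d ->
  Rabs (picard_limit t - picard n t) <= 2 * r * (/ 2) ^ n.
Proof.
  intros Ht.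
  assert (Hl : is_lim_seq (fun k => picard (k + n) t) (picard_limit t))
    by (apply (is_lim_seq_incr_n (fun k => picard k t) n), picard_limit_correct, Ht).
  assert (Hk : forall k,
            picard n t - 2 * r * (/ 2) ^ n <= picard (k + n) t <= picard n t + 2 * r * (/ 2) ^ n).
  { intros k. rewrite Nat.add_comm.
    assert (H := picard_cauchy_le n k t Ht). apply Rabs_le_between in H. lra. }
  apply Rabs_le. split.
  - assert (H := is_lim_seq_le _ _ _ _ (fun k => proj1 (Hk k)) (is_lim_seq_const _) Hl).
    simpl in H. lra.
  - assert (H := is_lim_seq_le _ _ _ _ (fun k => proj2 (Hk k)) Hl (is_lim_seq_const _)).
    simpl in H. lra.
Qed.

Lemma picard_lipschitz n s t : Rabs (s - a) <= d -> Rabs (t - a) <= d ->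
  Rabs (picard n s - picard n t) <= B * Rabs (s - t).
Proof.
  intros Hs Ht. destruct n as [|n].
  - simpl. rewrite Rminus_diag, Rabs_R0. apply Rmult_le_pos; [lra | apply Rabs_pos].
  - destruct (MVT_gen (picard (S n)) t s (fun x => f x (picard n x))) as [c [Hc E]].
    + intros x _. apply picard_succ_derive. intros; apply picard_continuous.
    + intros x _. apply continuity_pt_filterlim, picard_continuous.
    + rewrite E, Rabs_mult. apply Rmult_le_compat_r; [apply Rabs_pos |].
      assert (Hca : Rabs (c - a) <= d).
      { unfold Rmin, Rmax in Hc. destruct (Rle_dec t s); split_Rabs; lra. }
      apply f_bounded, picard_in_ball; exact Hca.
Qed.

Lemma picard_limit_at_center : picard_limit a = y0.
Proof.
  unfold picard_limit. rewrite (Lim_seq_ext _ (fun _ => y0)), Lim_seq_const; [reflexivity |].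
  intros n. apply picard_at_center.
Qed.

Lemma picard_limit_lipschitz s t : Rabs (s - a) <= d -> Rabs (t - a) <= d ->
  Rabs (picard_limit s - picard_limit t) <= B * Rabs (s - t).
Proof.
  intros Hs Ht.
  enough (Rabs (picard_limit s - picard_limit t) - B * Rabs (s - t) <= 0) by lra.
  apply (geometric_bound_nonpos _ (4 * r)). intros n.
  assert (H1 := picard_limit_approx n s Hs). assert (H2 := picard_limit_approx n t Ht).
  assert (H3 := picard_lipschitz n s t Hs Ht).
  replace (picard_limit s - picard_limit t)
    with ((picard_limit s - picard n s) + (picard n s - picard n t)
          + - (picard_limit t - picard n t))
    by ring.
  assert (H5 := Rabs_triang (picard_limit s - picard n s) (picard n s - picard n t)).
  assert (H6 := Rabs_triang ((picard_limit s - picard n s) + (picard n s - picard n t))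
                  (- (picard_limit t - picard n t))).
  rewrite Rabs_Ropp in H6. lra.
Qed.

Lemma picard_limit_in_ball t : Rabs (t - a) <= d -> Rabs (picard_limit t - y0) <= r.
Proof.
  intros Ht. rewrite <- picard_limit_at_center.
  eapply Rle_trans;
    [apply picard_limit_lipschitz; [exact Ht | rewrite Rminus_diag, Rabs_R0; lra] |].
  assert (B * Rabs (t - a) <= B * d) by (apply Rmult_le_compat_l; lra). lra.
Qed.

Lemma picard_limit_integrand_continuous s : Rabs (s - a) < d ->
  continuous (fun s => f s (picard_limit s)) s.
Proof.
  intros Hs. apply continuous_f_comp.
  apply (lipschitz_continuous _ (a - d) (a + d) B); [split_Rabs; lra |].
  intros x Hx. apply picard_limit_lipschitz; split_Rabs; lra.
Qed.

Lemma picard_limit_integral t : Rabs (t - a) < d ->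
  picard_limit t = y0 + RInt (fun s => f s (picard_limit s)) a t.
Proof.
  intros Ht.
  set (g := fun s => f s (picard_limit s)).
  assert (Hg : forall s, Rmin a t <= s <= Rmax a t -> continuous g s).
  { intros s Hs. apply segment_dist in Hs. apply picard_limit_integrand_continuous. lra. }
  enough (Rabs (picard_limit t - (y0 + RInt g a t)) <= 0)
    by (assert (0 <= Rabs (picard_limit t - (y0 + RInt g a t))) by apply Rabs_pos;
        apply Rminus_diag_uniq, Rabs_eq_0; lra).
  apply (geometric_bound_nonpos _ (r + d * K * (2 * r))). intros n.
  replace (picard_limit t - (y0 + RInt g a t))
    with ((picard_limit t - picard (S n) t) + (picard (S n) t - (y0 + RInt g a t))) by ring.
  eapply Rle_trans; [apply Rabs_triang |].
  assert (H1 := picard_limit_approx (S n) t (Rlt_le _ _ Ht)).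
  change (picard (S n) t) with (y0 + RInt (fun s => f s (picard n s)) a t) in H1 |- *.
  rewrite Rminus_plus_l_l, <- (RInt_minus (V := R_CompleteNormedModule));
    [| apply (ex_RInt_continuous (V := R_CompleteNormedModule));
       intros; try apply picard_integrand_continuous; auto ..].
  assert (Hr := radius_nonneg).
  assert (Hpow : 0 <= (/ 2) ^ n) by (apply pow_le; lra).
  assert (H2 : Rabs (RInt (fun s => minus (f s (picard n s)) (g s)) a t)
               <= Rabs (t - a) * (K * (2 * r * (/ 2) ^ n))).
  { apply abs_RInt_le_segment.
    - intros s Hs. apply (continuous_minus (fun s => f s (picard n s)) g);
        [apply picard_integrand_continuous | apply Hg, Hs].
    - intros s Hs. apply segment_dist in Hs.
      eapply Rle_trans;
        [apply f_lipschitz; try apply picard_in_ball; try apply picard_limit_in_ball; lra |].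
      apply Rmult_le_compat_l; [exact K_ge0 |].
      rewrite Rabs_minus_sym. apply picard_limit_approx. lra. }
  assert (H3 : Rabs (t - a) * (K * (2 * r * (/ 2) ^ n)) <= d * K * (2 * r) * (/ 2) ^ n).
  { replace (d * K * (2 * r) * (/ 2) ^ n) with (d * (K * (2 * r * (/ 2) ^ n))) by ring.
    apply Rmult_le_compat_r; [| apply Rlt_le, Ht].
    apply Rmult_le_pos; [exact K_ge0 | nra]. }
  simpl ((/ 2) ^ S n) in H1.
  eapply Rle_trans; [apply Rplus_le_compat; [exact H1 | exact (Rle_trans _ _ _ H2 H3)] |].
  right. field.
Qed.

Lemma picard_limit_derive t : Rabs (t - a) < d ->
  is_derive picard_limit t (f t (picard_limit t)).
Proof.
  intros Ht.
  assert (Hint : a - d < t < a + d) by (split_Rabs; lra).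
  apply (is_derive_ext_loc (fun x => y0 + RInt (fun s => f s (picard_limit s)) a x)).
  - apply (locally_interval _ t (a - d) (a + d) (proj1 Hint) (proj2 Hint)).
    intros x H1 H2. symmetry. apply picard_limit_integral. simpl in H1, H2. split_Rabs; lra.
  - apply (is_derive_RInt_plus_const (fun s => f s (picard_limit s)) y0 a t (a - d) (a + d));
      [lra | exact Hint |].
    intros z Hz. apply picard_limit_integrand_continuous. split_Rabs; lra.
Qed.

Theorem picard_lindelof : exists y : R -> R, y a = y0 /\
  forall t, Rabs (t - a) < d -> is_derive y t (f t (y t)) /\ Rabs (y t - y0) <= r.
Proof.
  exists picard_limit. split; [exact picard_limit_at_center |].
  intros t Ht. split; [apply picard_limit_derive, Ht | apply picard_limit_in_ball; lra].
Qed.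

End Picard.

Lemma continuous_sqrt_ode_rhs (v : R -> R) t h : (forall x, continuous v x) ->
  continuous (fun p : R * R => sqrt (snd p ^ 2 - v (fst p))) (t, h).
Proof.
  intros Hv.
  apply (continuous_comp (fun p : R * R => snd p ^ 2 - v (fst p)) sqrt); [| apply continuous_sqrt].
  apply (continuous_minus (fun p : R * R => snd p ^ 2) (fun p : R * R => v (fst p))).
  - apply (continuous_comp snd (fun x => x ^ 2)); [apply continuous_snd |].
    apply (ex_derive_continuous (fun x => x ^ 2)). auto_derive. exact I.
  - apply (continuous_comp fst v); [apply continuous_fst | apply Hv].
Qed.

Lemma local_existence (v : R -> R) a y0 : (forall x, continuous v x) -> 0 < y0 -> v a < y0 ^ 2 ->
  exists d m (y : R -> R), 0 < d /\ 0 < m /\ y a = y0 /\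
    forall t, Rabs (t - a) < d ->
      is_derive y t (sqrt (y t ^ 2 - v t)) /\ m <= y t ^ 2 - v t /\ 0 < y t < 2 * y0.
Proof.
  intros Hv Hy0 Hva.
  set (g := y0 ^ 2 - v a).
  assert (Hg : 0 < g) by (unfold g; lra).
  set (m := g / 2).
  set (r := Rmin (y0 / 2) (g / (8 * y0))).
  assert (Hr1 : r <= y0 / 2) by apply Rmin_l.
  assert (Hr2 : r <= g / (8 * y0)) by apply Rmin_r.
  assert (Hr0 : 0 < r) by (apply Rmin_glb_lt; [lra | apply Rdiv_lt_0_compat; lra]).
  assert (Hg4 : 0 < g / 4) by lra.
  destruct (proj1 (filterlim_locally v (v a)) (Hv a) (mkposreal _ Hg4)) as [delta Hdelta].
  set (B2 := 4 * y0 ^ 2 + Rabs (v a) + g).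
  (* r <= g / (8 y0) keeps h ^ 2 >= y0 ^ 2 - g / 4 on the ball, hence the radicand >= g / 2. *)
  assert (Hbox : forall t h, Rabs (t - a) < delta -> Rabs (h - y0) <= r ->
            0 < h < 2 * y0 /\ m <= h ^ 2 - v t /\ h ^ 2 - v t <= B2).
  { intros t h Ht Hh.
    assert (Hvt : Rabs (v t - v a) < g / 4) by exact (Hdelta t Ht).
    assert (2 * y0 * r <= g / 4).
    { apply Rle_trans with (2 * y0 * (g / (8 * y0))); [apply Rmult_le_compat_l; lra |].
      right. field. lra. }
    assert (0 <= Rabs (v a)) by apply Rabs_pos.
    apply Rabs_le_between in Hh. unfold m, B2. unfold g in *.
    split_Rabs; repeat split; nra. }
  set (B := sqrt B2).
  assert (HB2 : 0 <= B2) by (unfold B2; assert (0 <= Rabs (v a)) by apply Rabs_pos; nra).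
  assert (HB0 : 0 <= B) by apply sqrt_pos.
  assert (Hm : 0 < m) by (unfold m; lra).
  assert (Hsm : 0 < sqrt m) by (apply sqrt_lt_R0; lra).
  set (K := 4 * y0 / (2 * sqrt m)).
  assert (HK : 0 <= K) by (unfold K; apply Rdiv_le_0_compat; lra).
  set (d := Rmin (delta / 2) (Rmin (r / (B + 1)) (1 / (2 * K + 1)))).
  assert (Hdelta0 : 0 < delta) by apply cond_pos.
  assert (Hda : d <= delta / 2) by apply Rmin_l.
  assert (Hdb : d <= r / (B + 1)) by (eapply Rle_trans; [apply Rmin_r | apply Rmin_l]).
  assert (Hdc : d <= 1 / (2 * K + 1)) by (eapply Rle_trans; [apply Rmin_r | apply Rmin_r]).
  assert (Hd : 0 < d)
    by (apply Rmin_glb_lt; [lra | apply Rmin_glb_lt; apply Rdiv_lt_0_compat; lra]).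
  destruct (picard_lindelof (fun t h => sqrt (h ^ 2 - v t)) a y0 d r K B) as [y [Ha Hy]];
    try assumption.
  - apply (Rmult_le_reg_r (B + 1)); [lra |].
    apply Rle_trans with (r * B); [| nra].
    apply Rle_trans with (B * (r / (B + 1)) * (B + 1)); [apply Rmult_le_compat_r; [lra | nra] |].
    right. field. lra.
  - apply Rle_trans with (1 / (2 * K + 1) * K); [apply Rmult_le_compat_r; lra |].
    apply (Rmult_le_reg_r (2 * K + 1)); [lra |].
    replace (1 / (2 * K + 1) * K * (2 * K + 1)) with K by (field; lra). lra.
  - intros t h. exact (continuous_sqrt_ode_rhs v t h Hv).
  - intros t h Ht Hh. rewrite Rabs_pos_eq by apply sqrt_pos.
    destruct (Hbox t h ltac:(lra) Hh) as [_ [_ Hle]]. apply sqrt_le_1_alt, Hle.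
  - intros t h k Ht Hh Hk.
    destruct (Hbox t h ltac:(lra) Hh) as [Hh0 [Hhm _]].
    destruct (Hbox t k ltac:(lra) Hk) as [Hk0 [Hkm _]].
    apply sqrt_sqr_sub_lipschitz; lra.
  - exists d, m, y. split; [exact Hd | split; [exact Hm | split; [exact Ha |]]].
    intros t Ht. destruct (Hy t Ht) as [Hder Hin].
    destruct (Hbox t (y t) ltac:(lra) Hin) as [Hpos [Hrad _]]. auto.
Qed.

Lemma sqrt_lt_of_lt_sqr x y : 0 <= x -> 0 < y -> x < y ^ 2 -> sqrt x < y.
Proof. intros Hx Hy H. rewrite <- (sqrt_pow2 y) by lra. apply sqrt_lt_1_alt. lra. Qed.

Lemma lt_sqr_of_sqrt_lt x y : 0 <= x -> sqrt x < y -> x < y ^ 2 /\ 0 < y.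
Proof.
  intros Hx H. assert (0 <= sqrt x) by apply sqrt_pos.
  assert (sqrt x * sqrt x = x) by (apply sqrt_sqrt; lra). split; nra.
Qed.

Lemma Rbar_lt_between (x : R) (T1 T2 : Rbar) : Rbar_lt x T1 -> Rbar_lt x T2 ->
  exists c, x < c /\ Rbar_lt c T1 /\ Rbar_lt c T2.
Proof.
  intros H1 H2.
  destruct T1 as [r1| |]; destruct T2 as [r2| |]; simpl in *; try contradiction.
  - exists ((x + Rmin r1 r2) / 2).
    assert (Rmin r1 r2 <= r1) by apply Rmin_l. assert (Rmin r1 r2 <= r2) by apply Rmin_r.
    assert (x < Rmin r1 r2) by (apply Rmin_glb_lt; lra). lra.
  - exists ((x + r1) / 2). simpl. lra.
  - exists ((x + r2) / 2). simpl. lra.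
  - exists (x + 1). simpl. lra.
Qed.

Lemma right_limit_bounds (f : R -> R) p c L eps : p < c -> 0 < eps ->
  filterlim f (at_right p) (locally L) -> (forall t, p < t <= c -> continuous f t) ->
  exists tmin tmax, p < tmin <= c /\ p < tmax <= c /\
    forall t, p < t <= c -> Rmin (L - eps) (f tmin) <= f t <= Rmax (L + eps) (f tmax).
Proof.
  intros Hpc Heps Hlim Hc.
  destruct (at_right_interval _ _ (proj1 (filterlim_locally f L) Hlim (mkposreal _ Heps)))
    as [e [He Hnear]].
  set (a1 := p + Rmin e (c - p) / 2).
  assert (Rmin e (c - p) <= e) by apply Rmin_l.
  assert (Rmin e (c - p) <= c - p) by apply Rmin_r.
  assert (0 < Rmin e (c - p)) by (apply Rmin_glb_lt; lra).
  assert (Ha1 : a1 <= c) by (unfold a1; lra).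
  assert (Hcpt : forall t, a1 <= t <= c -> continuity_pt f t).
  { intros t Ht. apply continuity_pt_filterlim, Hc. unfold a1 in Ht. lra. }
  destruct (continuity_ab_min f a1 c Ha1 Hcpt) as [tmin [Hmin Htmin]].
  destruct (continuity_ab_maj f a1 c Ha1 Hcpt) as [tmax [Hmax Htmax]].
  exists tmin, tmax. unfold a1 in Htmin, Htmax. split; [lra | split; [lra |]].
  intros t Ht.
  assert (Rmin (L - eps) (f tmin) <= L - eps) by apply Rmin_l.
  assert (Rmin (L - eps) (f tmin) <= f tmin) by apply Rmin_r.
  assert (L + eps <= Rmax (L + eps) (f tmax)) by apply Rmax_l.
  assert (f tmax <= Rmax (L + eps) (f tmax)) by apply Rmax_r.
  destruct (Rlt_or_le t (p + e)) as [Hte | Hte].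
  - assert (Hb : Rabs (f t - L) < eps) by exact (Hnear t ltac:(lra)).
    apply Rabs_def2 in Hb. lra.
  - assert (f tmin <= f t) by (apply Hmin; unfold a1; lra).
    assert (f t <= f tmax) by (apply Hmax; unfold a1; lra). lra.
Qed.

Lemma exp_growth_bound (f df : R -> R) a b :
  (forall t, a < t < b -> is_derive f t (df t) /\ df t <= f t) ->
  forall s t, a < s -> s <= t -> t < b -> f t <= f s * exp (t - s).
Proof.
  intros Hf s t Hs Hst Htb.
  assert (Hmono : f t * exp (- t) <= f s * exp (- s)).
  { rewrite <- (Ropp_involutive (f t * exp (- t))), <- (Ropp_involutive (f s * exp (- s))).
    apply Ropp_le_contravar.
    apply (nondecreasing_of_derive_nonneg (fun x => - (f x * exp (- x)))
             (fun x => (f x - df x) * exp (- x)) a b); try lra.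
    intros x Hx. destruct (Hf x Hx) as [D Hle]. split.
    - auto_derive; [exists (df x); exact D |].
      change (Derive (fun x0 => f x0) x) with (Derive f x).
      rewrite (is_derive_unique _ _ _ D). ring.
    - apply Rmult_le_pos; [lra | apply Rlt_le, exp_pos]. }
  replace (f s * exp (t - s)) with (f s * exp (- s) * exp t)
    by (rewrite Rmult_assoc, <- exp_plus; f_equal; f_equal; ring).
  replace (f t) with (f t * exp (- t) * exp t)
    by (rewrite Rmult_assoc, <- exp_plus, Rplus_opp_l, exp_0; ring).
  apply Rmult_le_compat_r; [apply Rlt_le, exp_pos | exact Hmono].
Qed.

Lemma nondecreasing_bounded_left_limit (f : R -> R) a T M : a < T ->
  (forall s t, a < s -> s <= t -> t < T -> f s <= f t) -> (forall t, a < t < T -> f t <= M) ->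
  exists L, filterlim f (at_left T) (locally L) /\ forall t, a < t < T -> f t <= L.
Proof.
  intros HaT Hmono Hbnd.
  set (E := fun x => exists t, a < t < T /\ x = f t).
  destruct (completeness E) as [L [Hub Hlub]].
  - exists M. intros x [t [Ht ->]]. apply Hbnd, Ht.
  - exists (f ((a + T) / 2)). exists ((a + T) / 2). split; [lra | reflexivity].
  - assert (HLu : forall t, a < t < T -> f t <= L) by (intros t Ht; apply Hub; exists t; auto).
    exists L. split; [| exact HLu].
    apply filterlim_locally. intros eps.
    assert (Happrox : exists t1, a < t1 < T /\ L - eps < f t1).
    { apply NNPP. intros Hno.
      assert (L <= L - eps) by (apply Hlub; intros x [t [Ht ->]];
        apply Rnot_lt_le; intros Hc; apply Hno; exists t; auto).
      assert (0 < eps) by apply cond_pos. lra. }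
    destruct Happrox as [t1 [Ht1 Hft1]].
    apply (at_left_of_interval t1 T); [lra |]. intros u Hu.
    change (Rabs (f u - L) < eps).
    assert (f t1 <= f u) by (apply Hmono; lra). assert (f u <= L) by (apply HLu; lra).
    apply Rabs_def1; lra.
Qed.

Lemma sqrt_sqr_sub_le h w : 0 <= h -> 0 <= w -> sqrt (h ^ 2 - w) <= h.
Proof.
  intros Hh Hw. destruct (Rle_or_lt 0 (h ^ 2 - w)) as [E|E].
  - rewrite <- (sqrt_pow2 h) at 2 by exact Hh. apply sqrt_le_1_alt. lra.
  - rewrite sqrt_neg_0 by lra. exact Hh.
Qed.

Lemma smooth_continuous (v : R -> R) : smooth v -> forall x, continuous v x.
Proof. intros H x. apply (ex_derive_continuous v). exact (H 1%nat x). Qed.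

Section SolutionsInR0.

Variables (phi0 h0 : R) (v : R -> R).
Hypothesis v_continuous : forall x, continuous v x.
Hypothesis v_pos : forall phi, phi0 <= phi -> 0 < v phi.

Lemma solves_derive y T phi : solves_in_R0 phi0 h0 v y T -> phi0 < phi -> Rbar_lt phi T ->
  is_derive y phi (sqrt (y phi ^ 2 - v phi)).
Proof. intros [_ [_ [Hd _]]]. apply Hd. Qed.

Lemma solves_continuous y T phi : solves_in_R0 phi0 h0 v y T -> phi0 < phi -> Rbar_lt phi T ->
  continuous y phi.
Proof. intros S H1 H2. exact (is_derive_continuous _ _ _ (solves_derive y T phi S H1 H2)). Qed.

Lemma solves_above_boundary y T phi : solves_in_R0 phi0 h0 v y T -> phi0 <= phi -> Rbar_lt phi T ->
  v phi < y phi ^ 2 /\ 0 < y phi.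
Proof.
  intros [_ [_ [_ Hin]]] H1 H2. destruct (Hin phi H1 H2) as [_ Hs].
  apply lt_sqr_of_sqrt_lt; [apply Rlt_le, v_pos, H1 | exact Hs].
Qed.

Lemma solves_bounded_near_start y T c : solves_in_R0 phi0 h0 v y T -> phi0 < c -> Rbar_lt c T ->
  exists m M, 0 < m /\ bounded_solution v y phi0 c m M.
Proof.
  intros S Hc HcT.
  assert (HT : forall t, t <= c -> Rbar_lt t T) by (intros t Ht; destruct T; simpl in *; auto; lra).
  set (L := h0 ^ 2 - v phi0).
  assert (HL : 0 < L).
  { unfold L. rewrite <- (proj1 S).
    destruct (solves_above_boundary y T phi0 S (Rle_refl _) (HT _ (Rlt_le _ _ Hc))). lra. }
  assert (Hylim : filterlim y (at_right phi0) (locally h0)) by apply S.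
  assert (Hrad : filterlim (fun t => y t ^ 2 - v t) (at_right phi0) (locally L))
    by (apply filterlim_sqr_sub; [exact Hylim | apply continuous_at_right, v_continuous]).
  destruct (right_limit_bounds (fun t => y t ^ 2 - v t) phi0 c L (L / 2))
    as [tm [tm' [Htm [_ Hrb]]]];
    try assumption; try lra.
  { intros t Ht. apply continuous_sqr_sub; [apply (solves_continuous y T) | apply v_continuous];
      auto; [lra | apply HT; lra]. }
  destruct (right_limit_bounds y phi0 c h0 1) as [tM' [tM [_ [HtM Hyb]]]]; try assumption; try lra.
  { intros t Ht. apply (solves_continuous y T); [exact S | lra | apply HT; lra]. }
  exists (Rmin (L / 2) (y tm ^ 2 - v tm)), (Rmax (h0 + 1) (y tM)). split.
  - apply Rmin_glb_lt; [lra |].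
    destruct (solves_above_boundary y T tm S ltac:(lra) (HT tm ltac:(lra))). lra.
  - intros t Ht.
    destruct (solves_above_boundary y T t S ltac:(lra) (HT t ltac:(lra))) as [_ Hpos].
    split; [apply (solves_derive y T); [exact S | lra | apply HT; lra] |].
    specialize (Hrb t ltac:(lra)). specialize (Hyb t ltac:(lra)).
    split; [replace (L - L / 2) with (L / 2) in Hrb by field; lra | lra].
Qed.

Lemma solutions_agree y z T1 T2 phi :
  solves_in_R0 phi0 h0 v y T1 -> solves_in_R0 phi0 h0 v z T2 ->
  phi0 <= phi -> Rbar_lt phi T1 -> Rbar_lt phi T2 -> y phi = z phi.
Proof.
  intros Sy Sz Hphi H1 H2.
  destruct (Req_dec phi phi0) as [->|Hne]; [rewrite (proj1 Sy), (proj1 Sz); reflexivity |].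
  destruct (Rbar_lt_between phi T1 T2 H1 H2) as [c [Hc [Hc1 Hc2]]].
  destruct (solves_bounded_near_start y T1 c Sy ltac:(lra) Hc1) as [my [My [Hmy By]]].
  destruct (solves_bounded_near_start z T2 c Sz ltac:(lra) Hc2) as [mz [Mz [Hmz Bz]]].
  assert (Hm : Rmin my mz <= my /\ Rmin my mz <= mz) by (split; [apply Rmin_l | apply Rmin_r]).
  assert (HM : My <= Rmax My Mz /\ Mz <= Rmax My Mz) by (split; [apply Rmax_l | apply Rmax_r]).
  apply (bounded_solutions_agree_right v y z phi0 c (Rmin my mz) (Rmax My Mz)); [| | | | lra].
  - apply Rmin_glb_lt; assumption.
  - apply (bounded_solution_weaken v y phi0 c my My); tauto.
  - apply (bounded_solution_weaken v z phi0 c mz Mz); tauto.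
  - rewrite <- (Rminus_diag h0). apply filterlim_Rminus; [apply Sy | apply Sz].
Qed.

Lemma initial_solution : sqrt (v phi0) < h0 ->
  exists T y, phi0 < T /\ solves_in_R0 phi0 h0 v y (Finite T).
Proof.
  intros Hh0.
  destruct (lt_sqr_of_sqrt_lt (v phi0) h0) as [Hsq Hpos];
    [apply Rlt_le, v_pos, Rle_refl | exact Hh0 |].
  destruct (local_existence v phi0 h0 v_continuous Hpos Hsq) as [d [m [y [Hd [Hm [Hy0 Hy]]]]]].
  assert (Hloc : forall t, phi0 <= t < phi0 + d ->
            is_derive y t (sqrt (y t ^ 2 - v t)) /\ m <= y t ^ 2 - v t /\ 0 < y t < 2 * h0)
    by (intros t Ht; apply Hy; split_Rabs; lra).
  exists (phi0 + d), y. split; [lra |].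
  split; [exact Hy0 | split; [| split]].
  - rewrite <- Hy0. apply continuous_at_right.
    exact (is_derive_continuous _ _ _ (proj1 (Hloc phi0 ltac:(lra)))).
  - intros phi H1 H2. apply Hloc. simpl in H2. lra.
  - intros phi H1 H2. simpl in H2. split; [exact H1 |].
    destruct (Hloc phi ltac:(lra)) as [_ [Hrad Hb]].
    apply sqrt_lt_of_lt_sqr; [apply Rlt_le, v_pos, H1 | lra | lra].
Qed.

Lemma maximal_solution : sqrt (v phi0) < h0 ->
  exists (Tmax : Rbar) (H : R -> R), Rbar_lt phi0 Tmax /\ solves_in_R0 phi0 h0 v H Tmax /\
    forall T y, phi0 < T -> solves_in_R0 phi0 h0 v y (Finite T) -> Rbar_le T Tmax.
Proof.
  intros Hh0.
  set (S := fun T => exists y, phi0 < T /\ solves_in_R0 phi0 h0 v y (Finite T)).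
  destruct (Lub_Rbar_correct S) as [Hub Hlub].
  set (Tmax := Lub_Rbar S) in Hub, Hlub.
  (* H phi is the common value at phi of all solutions living beyond phi;
     by uniqueness the choice does not matter. *)
  set (H := fun phi => epsilon (inhabits 0) (fun c => exists T y, phi0 <= phi < T /\
              solves_in_R0 phi0 h0 v y (Finite T) /\ y phi = c)).
  assert (H_eq : forall T y phi, solves_in_R0 phi0 h0 v y (Finite T) -> phi0 <= phi < T ->
            H phi = y phi).
  { intros T y phi Sy Hphi.
    destruct (epsilon_spec (inhabits 0) (fun c => exists T y, phi0 <= phi < T /\
                solves_in_R0 phi0 h0 v y (Finite T) /\ y phi = c)) as [T' [y' [Hp [Sy' E]]]];
      [exists (y phi), T, y; auto |].
    change (y' phi = H phi) in E. rewrite <- E.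
    apply (solutions_agree y' y (Finite T') (Finite T)); auto; simpl; lra. }
  assert (H_loc : forall T y phi, solves_in_R0 phi0 h0 v y (Finite T) -> phi0 < phi < T ->
            locally phi (fun u => y u = H u)).
  { intros T y phi Sy Hphi. apply (locally_interval _ phi phi0 T (proj1 Hphi) (proj2 Hphi)).
    intros u H1 H2. symmetry. apply (H_eq T y u Sy). simpl in H1, H2. lra. }
  destruct (initial_solution Hh0) as [T0 [y0 [HT0 S0]]].
  assert (HT0max : Rbar_le T0 Tmax) by (apply Hub; exists y0; auto).
  assert (Hcover : forall phi : R, Rbar_lt phi Tmax ->
            exists T y, phi < T /\ solves_in_R0 phi0 h0 v y (Finite T)).
  { intros phi Hphi. apply NNPP. intros Hno.
    apply (Rbar_lt_not_le _ _ Hphi), Hlub. intros x [y [Hx Sy]]. simpl.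
    apply Rnot_lt_le. intros Hc. apply Hno. exists x, y. auto. }
  exists Tmax, H. split; [apply (Rbar_lt_le_trans _ T0); [exact HT0 | exact HT0max] |].
  split; [split; [| split; [| split]] |].
  - rewrite (H_eq T0 y0 phi0 S0 ltac:(lra)). apply S0.
  - apply (filterlim_ext_loc y0); [| apply S0].
    apply (at_right_of_interval phi0 T0 _ HT0). intros u Hu. symmetry. apply (H_eq T0 y0 u S0). lra.
  - intros phi H1 H2. destruct (Hcover phi H2) as [T [y [HT Sy]]].
    rewrite (H_eq T y phi Sy ltac:(lra)).
    apply (is_derive_ext_loc y); [apply (H_loc T y phi Sy); lra |].
    apply (solves_derive y (Finite T)); [exact Sy | exact H1 | exact HT].
  - intros phi H1 H2. destruct (Hcover phi H2) as [T [y [HT Sy]]].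
    rewrite (H_eq T y phi Sy ltac:(lra)). apply Sy; [exact H1 | exact HT].
  - intros T y HT Sy. apply Hub. exists y. auto.
Qed.

Lemma solves_glue H y T T' e : 0 < e -> phi0 < T - e -> T < T' ->
  solves_in_R0 phi0 h0 v H (Finite T) ->
  (forall t, T - e < t < T' -> is_derive y t (sqrt (y t ^ 2 - v t)) /\ v t < y t ^ 2 /\ 0 < y t) ->
  (forall t, T - e < t < T -> H t = y t) ->
  solves_in_R0 phi0 h0 v (fun t => if Rlt_dec t T then H t else y t) (Finite T').
Proof.
  intros He HeT HT' SH Hy Hagree.
  set (G := fun t => if Rlt_dec t T then H t else y t).
  assert (GH : forall t, t < T -> G t = H t)
    by (intros t Ht; unfold G; destruct (Rlt_dec t T); [reflexivity | lra]).
  assert (Gy : forall t, T - e < t -> G t = y t)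
    by (intros t Ht; unfold G; destruct (Rlt_dec t T); [apply Hagree; lra | reflexivity]).
  split; [| split; [| split]].
  - rewrite GH by lra. apply SH.
  - apply (filterlim_ext_loc H); [| apply SH].
    apply (at_right_of_interval phi0 T); [lra |]. intros u Hu. symmetry. apply GH. lra.
  - intros phi H1 H2. simpl in H2.
    destruct (Rlt_or_le phi T) as [Hlt | Hge].
    + rewrite GH by exact Hlt. apply (is_derive_ext_loc H).
      * apply (locally_interval _ phi phi0 T H1 Hlt). intros u _ Hu. symmetry. apply GH. exact Hu.
      * apply (solves_derive H (Finite T)); [exact SH | exact H1 | exact Hlt].
    + rewrite Gy by lra. apply (is_derive_ext_loc y).
      * apply (locally_interval _ phi (T - e) T'); [simpl; lra | exact H2 |].
        intros u Hu _. symmetry. apply Gy. exact Hu.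
      * apply Hy. lra.
  - intros phi H1 H2. simpl in H2. split; [exact H1 |].
    destruct (Rlt_or_le phi T) as [Hlt | Hge].
    + rewrite GH by exact Hlt. apply SH; [exact H1 | exact Hlt].
    + rewrite Gy by lra. destruct (Hy phi ltac:(lra)) as [_ [Hsq Hpos]].
      apply sqrt_lt_of_lt_sqr; [apply Rlt_le, v_pos, H1 | exact Hpos | exact Hsq].
Qed.

Lemma solution_extends H T L : phi0 < T -> solves_in_R0 phi0 h0 v H (Finite T) -> 0 < L ->
  filterlim H (at_left T) (locally L) -> v T < L ^ 2 ->
  exists T' y, T < T' /\ solves_in_R0 phi0 h0 v y (Finite T').
Proof.
  intros HT SH HL Hlim HvT.
  destruct (local_existence v T L v_continuous HL HvT) as [d [m [y [Hd [Hm [HyT Hy]]]]]].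
  set (g := L ^ 2 - v T).
  assert (Hrad : filterlim (fun t => H t ^ 2 - v t) (at_left T) (locally g))
    by (apply filterlim_sqr_sub; [exact Hlim | apply continuous_at_left, v_continuous]).
  assert (Hev_rad : at_left T (fun t => g / 2 < H t ^ 2 - v t))
    by (apply (filterlim_eventually_gt _ g); [exact Hrad | unfold g; lra]).
  assert (Hev_H : at_left T (fun t => H t < 2 * L))
    by (apply (filterlim_eventually_lt _ L); [exact Hlim | lra]).
  destruct (at_left_interval T _ (filter_and _ _ Hev_rad Hev_H)) as [e1 [He1 Hnear]].
  set (e := Rmin e1 (Rmin d ((T - phi0) / 2))).
  assert (He_e1 : e <= e1) by apply Rmin_l.
  assert (He_d : e <= d) by (eapply Rle_trans; [apply Rmin_r | apply Rmin_l]).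
  assert (He_T : e <= (T - phi0) / 2) by (eapply Rle_trans; [apply Rmin_r | apply Rmin_r]).
  assert (He : 0 < e) by (apply Rmin_glb_lt; [lra | apply Rmin_glb_lt; lra]).
  assert (Hym : Rmin m (g / 2) <= m) by apply Rmin_l.
  assert (HHm : Rmin m (g / 2) <= g / 2) by apply Rmin_r.
  assert (Hagree : forall t, T - e < t < T -> H t = y t).
  { apply (bounded_solutions_agree_left v H y (T - e) T (Rmin m (g / 2)) (2 * L)).
    - apply Rmin_glb_lt; unfold g; lra.
    - intros t Ht. destruct (Hnear t ltac:(lra)) as [Hrad_t HH_t].
      destruct (solves_above_boundary H (Finite T) t SH ltac:(lra) ltac:(simpl; lra)) as [_ Hpos].
      split; [apply (solves_derive H (Finite T)); [exact SH | lra | simpl; lra] |].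
      split; lra.
    - intros t Ht. destruct (Hy t ltac:(split_Rabs; lra)) as [D [Hrad_t Hb]].
      split; [exact D | split; lra].
    - rewrite <- (Rminus_diag L). apply filterlim_Rminus; [exact Hlim |].
      rewrite <- HyT. apply continuous_at_left.
      apply (is_derive_continuous _ _ _ (proj1 (Hy T ltac:(rewrite Rminus_diag, Rabs_R0; lra)))). }
  exists (T + d), (fun t => if Rlt_dec t T then H t else y t). split; [lra |].
  apply (solves_glue H y T (T + d) e); try assumption; try lra.
  intros t Ht. destruct (Hy t ltac:(split_Rabs; lra)) as [D [Hrad_t Hb]].
  split; [exact D | split; lra].
Qed.

Lemma maximal_solution_boundary H T : phi0 < T -> solves_in_R0 phi0 h0 v H (Finite T) ->
  (forall T' y, phi0 < T' -> solves_in_R0 phi0 h0 v y (Finite T') -> T' <= T) ->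
  filterlim H (at_left T) (locally (sqrt (v T))) /\ filterlim (Derive H) (at_left T) (locally 0).
Proof.
  intros HT SH Hmax.
  assert (Hder : forall t, phi0 < t < T -> is_derive H t (sqrt (H t ^ 2 - v t)))
    by (intros t Ht; apply (solves_derive H (Finite T)); [exact SH | lra | simpl; lra]).
  assert (Habove : forall t, phi0 <= t < T -> v t < H t ^ 2 /\ 0 < H t)
    by (intros t Ht; apply (solves_above_boundary H (Finite T)); [exact SH | lra | simpl; lra]).
  set (s0 := (phi0 + T) / 2).
  (* Since 0 <= H' <= H, H is nondecreasing and grows at most exponentially: it has a limit at T. *)
  assert (Hmono : forall s t, phi0 < s -> s <= t -> t < T -> H s <= H t).
  { apply (nondecreasing_of_derive_nonneg H (fun t => sqrt (H t ^ 2 - v t))).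
    intros t Ht. split; [apply Hder, Ht | apply sqrt_pos]. }
  assert (Hgrowth : forall t, s0 < t < T -> H t <= H s0 * exp (T - s0)).
  { assert (Hsub : forall x, phi0 < x < T ->
              is_derive H x (sqrt (H x ^ 2 - v x)) /\ sqrt (H x ^ 2 - v x) <= H x).
    { intros x Hx. split; [apply Hder, Hx |].
      apply sqrt_sqr_sub_le; [apply Rlt_le, Habove | apply Rlt_le, v_pos]; lra. }
    intros t Ht. unfold s0 in *.
    eapply Rle_trans; [apply (exp_growth_bound H _ phi0 T Hsub ((phi0 + T) / 2) t); lra |].
    apply Rmult_le_compat_l; [apply Rlt_le, Habove; lra |].
    apply Rlt_le, exp_increasing. lra. }
  destruct (nondecreasing_bounded_left_limit H s0 T (H s0 * exp (T - s0))) as [L [Hlim HLub]];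
    [unfold s0; lra | intros s t Hs Hst HtT; apply Hmono; unfold s0 in *; lra | exact Hgrowth |].
  assert (HL : 0 < L).
  { set (t1 := (s0 + T) / 2).
    assert (H t1 <= L) by (apply HLub; unfold t1, s0; lra).
    assert (0 < H t1) by (apply Habove; unfold t1, s0; lra). lra. }
  assert (Hrad : filterlim (fun t => H t ^ 2 - v t) (at_left T) (locally (L ^ 2 - v T)))
    by (apply filterlim_sqr_sub; [exact Hlim | apply continuous_at_left, v_continuous]).
  assert (Hge : Rbar_le 0 (L ^ 2 - v T)).
  { apply (filterlim_le (F := at_left T) (fun _ => 0) (fun t => H t ^ 2 - v t));
      [| apply filterlim_const | exact Hrad].
    apply (at_left_of_interval phi0 T _ HT). intros u Hu.
    destruct (Habove u ltac:(lra)). lra. }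
  simpl in Hge.
  assert (HvT : L ^ 2 = v T).
  { destruct (Rle_lt_or_eq_dec _ _ Hge) as [Hlt | Heq]; [exfalso | lra].
    destruct (solution_extends H T L HT SH HL Hlim ltac:(lra)) as [T' [y [HT' Sy]]].
    assert (T' <= T) by (apply (Hmax T' y); [lra | exact Sy]). lra. }
  split.
  - rewrite <- HvT, sqrt_pow2 by lra. exact Hlim.
  - apply (filterlim_ext_loc (fun t => sqrt (H t ^ 2 - v t))).
    + apply (at_left_of_interval phi0 T _ HT). intros u Hu.
      symmetry. apply is_derive_unique, Hder, Hu.
    + rewrite <- sqrt_0, <- (Rminus_diag (v T)), <- HvT at 1.
      apply (filterlim_comp _ _ _ _ sqrt _ _ _ Hrad), continuous_sqrt.
Qed.

Lemma not_typeA_and_typeB : ~ (typeA phi0 h0 v /\ typeB phi0 h0 v).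
Proof.
  intros [[phi1 [h1 [Hp1 [S1 [Hl1 _]]]]] [h2 S2]].
  assert (Hl2 : filterlim h2 (at_left phi1) (locally (sqrt (v phi1)))).
  { apply (filterlim_ext_loc h1); [| exact Hl1].
    apply (at_left_of_interval phi0 phi1 _ Hp1). intros u Hu.
    apply (solutions_agree h1 h2 (Finite phi1) p_infty);
      [exact S1 | exact S2 | lra | simpl; lra | exact I]. }
  assert (Hl3 := continuous_at_left h2 phi1 (solves_continuous h2 p_infty phi1 S2 Hp1 I)).
  assert (E := @filterlim_locally_unique R R_AbsRing R_NormedModule (at_left phi1)
                 (Proper_StrongProper _ (at_left_proper_filter phi1)) h2 _ _ Hl2 Hl3).
  destruct S2 as [_ [_ [_ Hin]]]. destruct (Hin phi1 ltac:(lra) I) as [_ Hs].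
  rewrite <- E in Hs. lra.
Qed.

End SolutionsInR0.

Theorem proposition2 (phi0 : R) (v : R -> R) (h0 : R)
  (Hsmooth : smooth v)
  (Hvpos : forall phi, phi0 <= phi -> 0 < v phi)
  (Hdvpos : forall phi, phi0 <= phi -> 0 < Derive v phi)
  (Hh0 : sqrt (v phi0) < h0) :
  (typeA phi0 h0 v \/ typeB phi0 h0 v) /\ ~ (typeA phi0 h0 v /\ typeB phi0 h0 v).
Proof.
  assert (Hv := smooth_continuous v Hsmooth).
  split; [| exact (not_typeA_and_typeB phi0 h0 v Hv Hvpos)].
  destruct (maximal_solution phi0 h0 v Hv Hvpos Hh0) as [Tmax [H [HT [SH Hmax]]]].
  destruct Tmax as [T | |]; [left | right | contradiction].
  - exists T, H. split; [exact HT | split; [exact SH |]].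
    apply (maximal_solution_boundary phi0 h0 v Hv Hvpos H T HT SH).
    intros T' y HT' Sy. exact (Hmax T' y HT' Sy).
  - exists H. exact SH.
Qed.
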